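(* For every $n\ge 3$, the local metric dimension of the convex polytope graph $S_n$ satisfies $lmd(S_n)=2$ if $n$ is odd and $lmd(S_n)=3$ if $n$ is even.
   Context: For $n\ge 3$, $S_n$ is the graph with vertex set $\{a_i,b_i,c_i,d_i : 1\le i\le n\}$ and edge set $\{a_ia_{i+1}, b_ib_{i+1}, c_ic_{i+1}, d_id_{i+1}, a_{i+1}b_i, a_ib_i, b_ic_i, c_id_i : 1\le i\le n\}$, indices taken modulo $n$. $d(u,v)$ is the graph distance. A vertex $w$ resolves $u,v$ if $d(u,w)\neq d(v,w)$. A set $W$ of vertices is a local resolving set if every two adjacent vertices are resolved by some element of $W$; $lmd(G)$ is the minimum cardinality of a local resolving set of $G$. *)

From mathcomp Require Import all_boot.
Set Implicit Arguments. Unset Strict Implicit. Unset Printing Implicit Defensive.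

Section Graphs.
Variable T : finType.
Variable adj : rel T.

Definition walk_of_length (k : nat) (u v : T) : bool :=
  [exists p : k.-tuple T, path adj u p && (last u p == v)].

(* A shortest walk has at most #|T| - 1 edges, so searching k < #|T| suffices;
   (for disconnected pairs the value would be #|T|, irrelevant here: S_n is connected). *)
Definition gdist (u v : T) : nat :=
  find (fun k => walk_of_length k u v) (iota 0 #|T|).

Definition resolves (w u v : T) : bool := gdist u w != gdist v w.

Definition local_resolving (W : {set T}) : bool :=
  [forall u, forall v, adj u v ==> [exists w in W, resolves w u v]].

(* local metric dimension: minimum cardinality of a local resolving set
   (the whole vertex set is always one, so #|T| is a valid default) *)
Definition lmd : nat :=
  \big[minn/#|T|]_(W : {set T} | local_resolving W) #|W|.
End Graphs.

(* Vertex (l, i) with l : 'I_4 encodes a_i (l=0), b_i (l=1), c_i (l=2), d_i (l=3);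
   indices i : 'I_n, successor taken modulo n via ordS. *)
Definition Sn_vertex (n : nat) := ('I_4 * 'I_n)%type.

Definition Sn_arc (n : nat) (x y : Sn_vertex n) : bool :=
  let: (l, i) := x in let: (m, j) := y in
  [|| (l == m) && (j == ordS i)
    , [&& val l == 0, val m == 1 & i == ordS j]            (* a_{i+1} b_i *)
    , [&& val l == 0, val m == 1 & i == j]
    , [&& val l == 1, val m == 2 & i == j]
    | [&& val l == 2, val m == 3 & i == j] ].

Definition Sn_adj (n : nat) : rel (Sn_vertex n) :=
  fun x y => Sn_arc x y || Sn_arc y x.

From mathcomp Require Import all_boot zify.
Set Implicit Arguments. Unset Strict Implicit. Unset Printing Implicit Defensive.

(* The vertices a_i, b_i form the rim: the cycle a_0 b_0 a_1 b_1 ... of length 2n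
   together with the chords a_i a_(i+1) and b_i b_(i+1), i.e. the square of the
   cycle C_(2n); c_i and d_i sit above b_i on layers 1 and 2. The distance in S_n
   is the difference of layers plus the distance in the rim. Hence an edge between
   layers is resolved by any rim vertex, and an edge inside a layer joins rim
   positions at offset 1 or 2 and is resolved by w iff the rim distances from the
   position of w differ. The rim positions 0, 1 see every such step when n is odd,
   and 0, 1, 2 always do. Conversely, any single vertex leaves one edge of each
   triangle of consecutive rim positions unresolved; when n is even, the triangle
   antipodal to w is not resolved by w at all, and a second vertex still leaves one
   of its edges unresolved. *)

Section GraphDistance.
Variables (T : finType) (adj : rel T).

Lemma find_iota_least (P : pred nat) m N : m < N -> P m -> (forall k, k < m -> ~~ P k) ->
  find P (iota 0 N) = m.
Proof.
move=> hmN hPm hlt; rewrite -(subnKC (ltnW hmN)) iotaD find_cat size_iota.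
have -> : has P (iota 0 m) = false.
  by apply/negbTE/hasPn => k; rewrite mem_iota add0n; apply: hlt.
by rewrite -(subnSK hmN) /= hPm addn0.
Qed.

Lemma gdist_potential (w : T) (f : T -> nat) :
  (forall x, (f x == 0) = (x == w)) ->
  (forall x y, adj x y -> f x <= (f y).+1) ->
  (forall x, 0 < f x -> exists2 y, adj x y & (f y).+1 = f x) ->
  (forall x, f x < #|T|) ->
  forall x, gdist adj x w = f x.
Proof.
move=> f0 lip desc fbound x; apply: find_iota_least => //.
- have walk k y : f y = k -> walk_of_length adj k y w.
    elim: k y => [|k IH] y fy.
      by move/eqP: fy; rewrite f0 => /eqP ->; apply/existsP; exists [tuple]; rewrite /=.
    have [z yz fz] : exists2 z, adj y z & (f z).+1 = f y by apply: desc; rewrite fy.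
    have /existsP [p /andP [hp /eqP hl]] : walk_of_length adj k z w by apply: IH; lia.
    by apply/existsP; exists [tuple of z :: p]; rewrite /= yz hp hl eqxx.
  exact: walk.
- move=> k hk; apply/negP => /existsP [p /andP [hp /eqP hl]].
  have path_bound (s : seq T) y : path adj y s -> f y <= size s + f (last y s).
    elim: s y => [|z s IH] y /=; first by rewrite add0n.
    by case/andP => /lip hyz /IH; lia.
  have := path_bound _ _ hp; rewrite hl size_tuple.
  have /eqP -> : f w == 0 by rewrite f0.
  lia.
Qed.

Lemma lmd_eq k (W : {set T}) : local_resolving adj W -> #|W| <= k ->
  (forall W', local_resolving adj W' -> k <= #|W'|) -> lmd adj = k.
Proof.
move=> hW hWk hmin; apply/eqP; rewrite eqn_leq; apply/andP; split.
  apply: leq_trans hWk; rewrite /lmd.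
  have : W \in index_enum {set T} by rewrite mem_index_enum.
  elim: (index_enum _) => [|W' r IH] //=; rewrite inE big_cons.
  case/orP => [/eqP <-|hr]; first by rewrite hW geq_minl.
  case: (local_resolving adj W'); last exact: IH.
  exact: leq_trans (geq_minr _ _) (IH hr).
rewrite /lmd; apply: (big_ind (fun x => k <= x)) => //.
- exact: leq_trans (hmin _ hW) (max_card W).
- by move=> x y hx hy; rewrite leq_min hx hy.
Qed.

Lemma local_resolving_card_gt k (W : {set T}) : local_resolving adj W ->
  (forall s : seq T, size s <= k ->
     exists u v, adj u v /\ {in s, forall w, ~~ resolves adj w u v}) ->
  k < #|W|.
Proof.
move=> hW hk; rewrite ltnNge; apply/negP => hWk.
have [|u [v [huv hres]]] := hk (enum W); first by rewrite -cardE.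
move/forallP: hW => /(_ u) /forallP /(_ v); rewrite huv /= => /existsP [w /andP [hw]].
by apply/negP; apply: hres; rewrite mem_enum.
Qed.

End GraphDistance.

(* For positions p, q < m on the cycle C_m: cdist is the distance in C_m, sqcdist
   the distance in its square, coffset m q p the offset of p from q, and
   cshift m k p p' says p' = p + k (mod m), in a form lia can use. *)
Definition absdiff (a b : nat) := (a - b) + (b - a).
Definition cdist (m p q : nat) := minn (absdiff p q) (m - absdiff p q).
Definition sqcdist (m p q : nat) := uphalf (cdist m p q).
Definition cshift (m k p p' : nat) := p' = p + k \/ p' + m = p + k.
Definition cnear (m k p p' : nat) := cshift m k p p' \/ cshift m k p' p.
Definition coffset (m q p : nat) := if q <= p then p - q else p + m - q.

Section CyclicDistance.
Variable m : nat.

Lemma cdistP p q : p < m -> q < m ->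
  [\/ p <= q /\ 2 * (q - p) <= m /\ cdist m p q = q - p,
      p <= q /\ m <= 2 * (q - p) /\ cdist m p q = m - (q - p),
      q <= p /\ 2 * (p - q) <= m /\ cdist m p q = p - q |
      q <= p /\ m <= 2 * (p - q) /\ cdist m p q = m - (p - q)].
Proof.
rewrite /cdist /absdiff => hp hq.
case: (leqP p q) => h1; case: (leqP (2 * (q - p)) m); case: (leqP (2 * (p - q)) m) => *.
all: first [ by constructor 1; lia | by constructor 2; lia
           | by constructor 3; lia | by constructor 4; lia ].
Qed.

Lemma cdist_eq0 p q : p < m -> q < m -> cdist m p q = 0 -> p = q.
Proof. by move=> hp hq; case: (cdistP hp hq); lia. Qed.

Lemma cdist_le_half p q : p < m -> q < m -> 2 * cdist m p q <= m.
Proof. by move=> hp hq; case: (cdistP hp hq); lia. Qed.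

Lemma odd_cdist p q : ~~ odd m -> p < m -> q < m -> odd (cdist m p q) = odd (p + q).
Proof. by move=> hm hp hq; case: (cdistP hp hq); lia. Qed.

Lemma cnearC k p p' : cnear m k p p' -> cnear m k p' p.
Proof. by rewrite /cnear; case; [right | left]. Qed.

Lemma cdist_near_le k p p' q : p < m -> p' < m -> q < m -> cnear m k p p' ->
  cdist m p q <= cdist m p' q + k.
Proof.
by rewrite /cnear /cshift => hp hp' hq; case: (cdistP hp hq); case: (cdistP hp' hq); lia.
Qed.

Lemma cdist_near_desc k p q : p < m -> q < m -> 0 < k -> k <= cdist m p q ->
  exists p', [/\ p' < m, cnear m k p p' & cdist m p' q + k = cdist m p q].
Proof.
rewrite /cnear /cshift => hp hq hk.
case: (cdistP hp hq) => -[h1 [h2 ->]] hc.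
- have hp' : p + k < m by lia.
  by exists (p + k); case: (cdistP hp' hq); split=> //; lia.
- case: (leqP k p) => h3.
    have hp' : p - k < m by lia.
    by exists (p - k); case: (cdistP hp' hq); split=> //; lia.
  have hp' : p + m - k < m by lia.
  by exists (p + m - k); case: (cdistP hp' hq); split=> //; lia.
- have hp' : p - k < m by lia.
  by exists (p - k); case: (cdistP hp' hq); split=> //; lia.
- case: (ltnP (p + k) m) => h3.
    by exists (p + k); case: (cdistP h3 hq); split=> //; lia.
  have hp' : p + k - m < m by lia.
  by exists (p + k - m); case: (cdistP hp' hq); split=> //; lia.
Qed.

Lemma sqcdist_near_le k p p' q : k <= 2 -> p < m -> p' < m -> q < m -> cnear m k p p' ->
  sqcdist m p q <= (sqcdist m p' q).+1.
Proof. by rewrite /sqcdist => hk hp hp' hq /(cdist_near_le hp hp' hq); lia. Qed.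

End CyclicDistance.

Section Rim.
Variable n : nat.
Hypothesis n_ge3 : 3 <= n.

Definition rim_step (p p' : nat) :=
  [/\ p < 2 * n, p' < 2 * n & cshift (2 * n) 1 p p' \/ cshift (2 * n) 2 p p'].

Definition rim_blind (Q : seq nat) (p p' : nat) :=
  rim_step p p' /\ all (fun q => sqcdist (2 * n) p q == sqcdist (2 * n) p' q) Q.

Definition rim_triangle (p0 p1 p2 : nat) :=
  [/\ p0 < 2 * n, p1 < 2 * n, p2 < 2 * n, cshift (2 * n) 1 p0 p1 & cshift (2 * n) 1 p1 p2].

Lemma sqcdist_step1 q p p' : q < 2 * n -> p < 2 * n -> p' < 2 * n -> cshift (2 * n) 1 p p' ->
  (sqcdist (2 * n) p q == sqcdist (2 * n) p' q) =
  ((coffset (2 * n) q p < n) == odd (coffset (2 * n) q p)).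
Proof.
rewrite /sqcdist /coffset /cshift => hq hp hp' e.
by case: (cdistP hp hq); case: (cdistP hp' hq); case: (leqP q p); lia.
Qed.

Lemma sqcdist_step2 q p p' : q < 2 * n -> p < 2 * n -> p' < 2 * n -> cshift (2 * n) 2 p p' ->
  (sqcdist (2 * n) p q == sqcdist (2 * n) p' q) =
  ((coffset (2 * n) q p).+1 == n) || ((coffset (2 * n) q p).+1 == 2 * n).
Proof.
rewrite /sqcdist /coffset /cshift => hq hp hp' e.
by case: (cdistP hp hq); case: (cdistP hp' hq); case: (leqP q p); lia.
Qed.

Lemma not_rim_blind01 p p' : odd n -> ~ rim_blind [:: 0; 1] p p'.
Proof.
have [q0 q1] : 0 < 2 * n /\ 1 < 2 * n by lia.
move=> n_odd [[hp hp' [e|e]]] /=; rewrite andbT.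
  rewrite (sqcdist_step1 q0 hp hp' e) (sqcdist_step1 q1 hp hp' e) /coffset leq0n.
  by case: (posnP p); lia.
rewrite (sqcdist_step2 q0 hp hp' e) (sqcdist_step2 q1 hp hp' e) /coffset leq0n.
by case: (posnP p); lia.
Qed.

Lemma not_rim_blind012 p p' : ~ rim_blind [:: 0; 1; 2] p p'.
Proof.
have [q0 q1 q2] : [/\ 0 < 2 * n, 1 < 2 * n & 2 < 2 * n] by split; lia.
move=> [[hp hp' [e|e]]] /=; rewrite andbT.
  rewrite (sqcdist_step1 q0 hp hp' e) (sqcdist_step1 q1 hp hp' e) (sqcdist_step1 q2 hp hp' e).
  by rewrite /coffset leq0n; case: (leqP 1 p); case: (leqP 2 p); lia.
rewrite (sqcdist_step2 q0 hp hp' e) (sqcdist_step2 q1 hp hp' e) (sqcdist_step2 q2 hp hp' e).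
by rewrite /coffset leq0n; case: (leqP 1 p); case: (leqP 2 p); lia.
Qed.

Lemma rim_triangle_steps p0 p1 p2 : rim_triangle p0 p1 p2 ->
  [/\ rim_step p0 p1, rim_step p1 p2 & rim_step p0 p2].
Proof. by move=> [h0 h1 h2 e01 e12]; split; split=> //; move: e01 e12; rewrite /cshift; lia. Qed.

Lemma rim_triangle_exists p0 : p0 < 2 * n -> exists p1 p2, rim_triangle p0 p1 p2.
Proof.
rewrite /rim_triangle /cshift => hp0.
have [p1 hp1 e1] : exists2 p1, p1 < 2 * n & p1 = p0 + 1 \/ p1 + 2 * n = p0 + 1.
  by case: (ltnP p0.+1 (2 * n)) => h; [exists p0.+1 | exists 0]; lia.
have [p2 hp2 e2] : exists2 p2, p2 < 2 * n & p2 = p1 + 1 \/ p2 + 2 * n = p1 + 1.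
  by case: (ltnP p1.+1 (2 * n)) => h; [exists p1.+1 | exists 0]; lia.
by exists p1, p2.
Qed.

Lemma sqcdist_triangle q p0 p1 p2 : q < 2 * n -> rim_triangle p0 p1 p2 ->
  [\/ sqcdist (2 * n) p0 q = sqcdist (2 * n) p1 q,
      sqcdist (2 * n) p1 q = sqcdist (2 * n) p2 q |
      sqcdist (2 * n) p0 q = sqcdist (2 * n) p2 q].
Proof.
move=> hq [h0 h1 h2 e01 e12].
suff: sqcdist (2 * n) p0 q = sqcdist (2 * n) p1 q \/ sqcdist (2 * n) p1 q = sqcdist (2 * n) p2 q \/
      sqcdist (2 * n) p0 q = sqcdist (2 * n) p2 q.
  by case=> [|[|]]; [constructor 1 | constructor 2 | constructor 3].
have lip k pi pj : k <= 2 -> pi < 2 * n -> pj < 2 * n -> cnear (2 * n) k pi pj ->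
    sqcdist (2 * n) pi q <= (sqcdist (2 * n) pj q).+1 /\
    sqcdist (2 * n) pj q <= (sqcdist (2 * n) pi q).+1.
  by move=> hk hi hj hij; split; apply: (sqcdist_near_le hk) => //; apply: cnearC.
have := lip 1 _ _ isT h0 h1 (or_introl e01); have := lip 1 _ _ isT h1 h2 (or_introl e12).
have e02 : cshift (2 * n) 2 p0 p2 by move: e01 e12; rewrite /cshift; lia.
have := lip 2 _ _ isT h0 h2 (or_introl e02).
lia.
Qed.

Lemma rim_triangle_blind q Q p0 p1 p2 : q < 2 * n -> rim_triangle p0 p1 p2 ->
  all (fun q' => (sqcdist (2 * n) p0 q' == sqcdist (2 * n) p1 q') &&
                 (sqcdist (2 * n) p1 q' == sqcdist (2 * n) p2 q')) Q ->
  exists p p', rim_blind (q :: Q) p p'.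
Proof.
move=> hq htri /allP flatQ; have [s01 s12 s02] := rim_triangle_steps htri.
case: (sqcdist_triangle hq htri) => e; [exists p0, p1 | exists p1, p2 | exists p0, p2].
all: split=> //=; rewrite e eqxx /=; apply/allP => q' /flatQ /andP [/eqP e1 /eqP e2].
all: by rewrite ?e1 ?e2.
Qed.

Lemma rim_antipodal_triangle q : ~~ odd n -> q < 2 * n ->
  exists p0 p1 p2, [/\ rim_triangle p0 p1 p2, sqcdist (2 * n) p0 q = sqcdist (2 * n) p1 q
                     & sqcdist (2 * n) p1 q = sqcdist (2 * n) p2 q].
Proof.
(* The offsets n - 1, n and n + 1 from q all give the rim distance n/2. *)
move=> n_even hq.
have [p0 hp0 e0] : exists2 p0, p0 < 2 * n & p0 = q + n - 1 \/ p0 + 2 * n = q + n - 1.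
  by case: (ltnP (q + n - 1) (2 * n)) => h; [exists (q + n - 1) | exists (q + n - 1 - 2 * n)]; lia.
have [p1 [p2 htri]] := rim_triangle_exists hp0.
exists p0, p1, p2; split=> //; case: htri => _ hp1 hp2 e01 e12.
all: move: e01 e12; rewrite /sqcdist /cshift.
  by case: (cdistP hp0 hq); case: (cdistP hp1 hq); lia.
by case: (cdistP hp1 hq); case: (cdistP hp2 hq); lia.
Qed.

Lemma rim_blind_exists1 Q : size Q <= 1 -> all (fun q => q < 2 * n) Q ->
  exists p p', rim_blind Q p p'.
Proof.
have [p1 [p2 htri]] : exists p1 p2, rim_triangle 0 p1 p2 by apply: rim_triangle_exists; lia.
case: Q => [|q [|]] //= _; last by rewrite andbT => hq; exact: rim_triangle_blind hq htri _.
have hq0 : 0 < 2 * n by lia.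
have [p [p' [hs _]]] := rim_triangle_blind (Q := [::]) hq0 htri isT.
by exists p, p'.
Qed.

Lemma rim_blind_exists2 Q : ~~ odd n -> size Q <= 2 -> all (fun q => q < 2 * n) Q ->
  exists p p', rim_blind Q p p'.
Proof.
case: Q => [|q1 [|q2 [|]]] //= n_even _; try by move=> hQ; apply: rim_blind_exists1 => //=.
rewrite andbT => /andP[hq1 hq2].
have [p0 [p1 [p2 [htri e01 e12]]]] := rim_antipodal_triangle n_even hq2.
by apply: rim_triangle_blind hq1 htri _; rewrite /= e01 e12 !eqxx.
Qed.

End Rim.

Section ConvexPolytope.
Variable n : nat.
Hypothesis n_ge3 : 3 <= n.
Local Notation V := (Sn_vertex n).
Local Notation vtx l i := ((@Ordinal 4 l isT, i) : V).

(* a_i is at rim position 2i and b_i, c_i, d_i at 2i+1; a_i and b_i are on layer 0. *)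
Definition layer (v : V) : nat := v.1 - 1.
Definition pos (v : V) : nat := 2 * v.2 + minn v.1 1.
Definition Sn_dist (x w : V) : nat :=
  absdiff (layer x) (layer w) + sqcdist (2 * n) (pos x) (pos w).

Lemma pos_lt v : pos v < 2 * n.
Proof. by rewrite /pos; have := ltn_ord v.2; lia. Qed.

Lemma layer_le v : layer v <= 2.
Proof. by rewrite /layer; have := ltn_ord v.1; lia. Qed.

Lemma odd_pos v : 0 < layer v -> odd (pos v).
Proof. by rewrite /layer /pos; lia. Qed.

Lemma Sn_vertexP (v : V) : exists i, [\/ v = vtx 0 i, v = vtx 1 i, v = vtx 2 i | v = vtx 3 i].
Proof.
case: v => [[[|[|[|[|l]]]] hl] i]; exists i; last by [].
all: [> constructor 1 | constructor 2 | constructor 3 | constructor 4].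
all: by congr (_, _); apply: val_inj.
Qed.

Lemma cshift_ordS (i : 'I_n) : cshift n 1 i (ordS i).
Proof.
rewrite /cshift /=; case: (ltnP i.+1 n) => h; first by left; rewrite modn_small ?addn1.
have e : i.+1 = n by apply/eqP; rewrite eqn_leq h ltn_ord.
by rewrite e modnn; lia.
Qed.

Lemma cshift_ord_pred (i : 'I_n) : cshift n 1 (ord_pred i) i.
Proof. by rewrite -{2}(ord_predK i); apply: cshift_ordS. Qed.

Lemma Sn_adjC : symmetric (@Sn_adj n).
Proof. by move=> x y; rewrite /Sn_adj orbC. Qed.

Lemma Sn_adj_ring (l : 'I_4) (i : 'I_n) : Sn_adj (l, i) (l, ordS i).
Proof. by rewrite /Sn_adj /Sn_arc !eqxx. Qed.

Lemma Sn_adj_spokes (i : 'I_n) :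
  [/\ Sn_adj (vtx 0 i) (vtx 1 i), Sn_adj (vtx 1 i) (vtx 2 i) & Sn_adj (vtx 2 i) (vtx 3 i)].
Proof. by split; rewrite /Sn_adj /Sn_arc /= eqxx ?orbT. Qed.

Lemma Sn_adj_zigzag (i : 'I_n) : Sn_adj (vtx 1 i) (vtx 0 (ordS i)).
Proof. by rewrite /Sn_adj /Sn_arc /= eqxx ?orbT. Qed.

Lemma Sn_adj_cases x y : Sn_adj x y ->
  (pos x = pos y /\ absdiff (layer x) (layer y) = 1) \/
  (layer x = layer y /\ (cnear (2 * n) 1 (pos x) (pos y) \/ cnear (2 * n) 2 (pos x) (pos y))).
Proof.
case: x y => l i [m j]; rewrite /Sn_adj /Sn_arc /absdiff /layer /pos /cnear /cshift /=.
have := ltn_ord l; have := ltn_ord m; have := cshift_ordS i; have := cshift_ordS j.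
rewrite /cshift => hj hi hm hl.
by case/orP => /or4P [ /andP[/eqP e1 /eqP e2] | /and3P[/eqP e1 /eqP e2 /eqP e3]
  | /and3P[/eqP e1 /eqP e2 /eqP e3]
  | /orP[/and3P[/eqP e1 /eqP e2 /eqP e3] | /and3P[/eqP e1 /eqP e2 /eqP e3]] ]; subst; lia.
Qed.

Lemma rim_neighbor1 x p' : layer x = 0 -> p' < 2 * n -> cnear (2 * n) 1 (pos x) p' ->
  exists y, [/\ Sn_adj x y, layer y = 0 & pos y = p'].
Proof.
move=> + hp'; have hS := cshift_ordS; have hP := cshift_ord_pred.
have [i [->|->|->|->]] := Sn_vertexP x; rewrite /layer /pos /= => hl hnear; try lia.
- have [e|e] : p' = 2 * i + 1 \/ p' = 2 * ord_pred i + 1.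
    by move: hnear (hP i) (ltn_ord i) (ltn_ord (ord_pred i)); rewrite /cnear /cshift; lia.
  + by exists (vtx 1 i); split; [case: (Sn_adj_spokes i) | | rewrite e].
  + exists (vtx 1 (ord_pred i)); split; [ | by [] | by rewrite e].
    by rewrite Sn_adjC -{2}(ord_predK i) Sn_adj_zigzag.
- have [e|e] : p' = 2 * ordS i \/ p' = 2 * i.
    by move: hnear (hS i) (ltn_ord i) (ltn_ord (ordS i)); rewrite /cnear /cshift; lia.
  + by exists (vtx 0 (ordS i)); split; [apply: Sn_adj_zigzag | | rewrite e /= addn0].
  + exists (vtx 0 i); split; [ | by [] | by rewrite e /= addn0].
    by rewrite Sn_adjC; case: (Sn_adj_spokes i).
Qed.

Lemma ring_neighbor2 x p' : p' < 2 * n -> cnear (2 * n) 2 (pos x) p' ->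
  exists y, [/\ Sn_adj x y, layer y = layer x & pos y = p'].
Proof.
case: x => l i hp'; rewrite /pos /= => hnear.
have [e|e] : p' = 2 * ordS i + minn l 1 \/ p' = 2 * ord_pred i + minn l 1.
  move: hnear (cshift_ordS i) (cshift_ord_pred i) (ltn_ord (ordS i)) (ltn_ord (ord_pred i)).
  by rewrite /cnear /cshift; lia.
- by exists (l, ordS i); split=> //; apply: Sn_adj_ring.
- exists (l, ord_pred i); split=> //.
  by rewrite Sn_adjC -{2}(ord_predK i) Sn_adj_ring.
Qed.

Lemma spoke_down x : 0 < layer x ->
  exists y, [/\ Sn_adj x y, (layer y).+1 = layer x & pos y = pos x].
Proof.
have [i [->|->|->|->]] := Sn_vertexP x => //= _.
- by exists (vtx 1 i); split=> //; rewrite Sn_adjC; case: (Sn_adj_spokes i).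
- by exists (vtx 2 i); split=> //; rewrite Sn_adjC; case: (Sn_adj_spokes i).
Qed.

Lemma spoke_up x : odd (pos x) -> layer x < 2 ->
  exists y, [/\ Sn_adj x y, layer y = (layer x).+1 & pos y = pos x].
Proof.
have [i [->|->|->|->]] := Sn_vertexP x; rewrite /layer /pos /= => ho hl; try lia.
- by exists (vtx 2 i); split=> //; case: (Sn_adj_spokes i).
- by exists (vtx 3 i); split=> //; case: (Sn_adj_spokes i).
Qed.

Lemma Sn_vertex_inj x y : layer x = layer y -> pos x = pos y -> x = y.
Proof.
case: x y => [l i] [m j]; rewrite /layer /pos /= => e1 e2.
have := ltn_ord l; have := ltn_ord m => hm hl.
by congr (_, _); apply: val_inj => /=; lia.
Qed.

Lemma Sn_dist_adj_le x y w : Sn_adj x y -> Sn_dist x w <= (Sn_dist y w).+1.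
Proof.
have hx := pos_lt x; have hy := pos_lt y; have hw := pos_lt w.
rewrite /Sn_dist => /Sn_adj_cases [[-> hl] | [-> [h | h]]].
- by move: hl; rewrite /absdiff; lia.
- by have := sqcdist_near_le (isT : 1 <= 2) hx hy hw h; lia.
- by have := sqcdist_near_le (leqnn 2) hx hy hw h; lia.
Qed.

Lemma Sn_dist_eq0 x w : (Sn_dist x w == 0) = (x == w).
Proof.
apply/eqP/eqP => [|->]; last by rewrite /Sn_dist /sqcdist /cdist /absdiff; lia.
rewrite /Sn_dist /sqcdist /absdiff => h.
apply: Sn_vertex_inj; first lia.
by apply: (cdist_eq0 (pos_lt x) (pos_lt w)); lia.
Qed.

Lemma Sn_dist_lt x w : Sn_dist x w < #|{: V}|.
Proof.
rewrite card_prod !card_ord /Sn_dist /sqcdist /absdiff.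
have := cdist_le_half (pos_lt x) (pos_lt w); have := layer_le x; have := layer_le w.
lia.
Qed.

Lemma Sn_dist_desc x w : 0 < Sn_dist x w ->
  exists2 y, Sn_adj x y & (Sn_dist y w).+1 = Sn_dist x w.
Proof.
have hx := pos_lt x; have hw := pos_lt w; have lx := layer_le x; have lw := layer_le w.
have par : odd (cdist (2 * n) (pos x) (pos w)) = odd (pos x + pos w).
  by apply: odd_cdist => //; lia.
rewrite /Sn_dist /sqcdist /absdiff => hpos.
case: (ltngtP (layer x) (layer w)) => hl.
- have ow := odd_pos (leq_ltn_trans (leq0n _) hl).
  case: (boolP (odd (pos x))) => ox.
    have [y [xy ly py]] := spoke_up ox (leq_trans hl lw).
    by exists y => //; rewrite ly py; lia.
  (* x is on layer 0 below w, at odd rim distance: one rim step lowers its uphalf. *)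
  have lx0 : layer x = 0 by move: ox; apply: contraNeq; rewrite -lt0n; apply: odd_pos.
  have c1 : 0 < cdist (2 * n) (pos x) (pos w) by lia.
  have [p' [hp' hnear hc]] := cdist_near_desc hx hw (isT : 0 < 1) c1.
  have [y [xy ly py]] := rim_neighbor1 lx0 hp' hnear.
  by exists y => //; rewrite ly py lx0; lia.
- have [y [xy ly py]] := spoke_down (leq_ltn_trans (leq0n _) hl).
  by exists y => //; rewrite -ly py; lia.
- have c1 : 0 < cdist (2 * n) (pos x) (pos w) by lia.
  case: (leqP 2 (cdist (2 * n) (pos x) (pos w))) => c2.
    have [p' [hp' hnear hc]] := cdist_near_desc hx hw (isT : 0 < 2) c2.
    have [y [xy ly py]] := ring_neighbor2 hp' hnear.
    by exists y => //; rewrite ly py; lia.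
  (* Rim distance 1 joins positions of different parity; the even one is on layer 0. *)
  have lx0 : layer x = 0.
    case: (posnP (layer x)) => // /[dup] /odd_pos ox; rewrite hl => /odd_pos.
    lia.
  have [p' [hp' hnear hc]] := cdist_near_desc hx hw (isT : 0 < 1) c1.
  have [y [xy ly py]] := rim_neighbor1 lx0 hp' hnear.
  by exists y => //; rewrite ly py -hl lx0; lia.
Qed.

Lemma gdist_Sn x w : gdist (@Sn_adj n) x w = Sn_dist x w.
Proof.
apply: (gdist_potential (f := Sn_dist ^~ w)) => //.
- by move=> y; apply: Sn_dist_eq0.
- by move=> y z; apply: Sn_dist_adj_le.
- by move=> y; apply: Sn_dist_desc.
- by move=> y; apply: Sn_dist_lt.
Qed.

Lemma resolves_Sn w u v : resolves (@Sn_adj n) w u v = (Sn_dist u w != Sn_dist v w).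
Proof. by rewrite /resolves !gdist_Sn. Qed.

Lemma Sn_rim_vertex p : p < 2 * n -> exists v, layer v = 0 /\ pos v = p.
Proof.
move=> hp; have hi : p./2 < n by lia.
by case: (boolP (odd p)) => op; [exists (vtx 1 (Ordinal hi)) | exists (vtx 0 (Ordinal hi))];
  rewrite /layer /pos /=; split=> //; lia.
Qed.

Lemma Sn_rim_edge p p' : rim_step n p p' ->
  exists u v, [/\ Sn_adj u v, layer u = 0, layer v = 0, pos u = p & pos v = p'].
Proof.
case=> hp hp' hstep; have [u [lu pu]] := Sn_rim_vertex hp.
have [v [uv lv pv]] : exists v, [/\ Sn_adj u v, layer v = 0 & pos v = p'].
  case: hstep => hs; first by apply: rim_neighbor1; rewrite // pu; left.
  by rewrite -lu; apply: ring_neighbor2; rewrite // pu; left.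
by exists u, v.
Qed.

Lemma Sn_local_resolving_landmarks (ws : seq V) w0 : w0 \in ws -> layer w0 = 0 ->
  (forall p p', ~ rim_blind n [seq pos w | w <- ws] p p') ->
  local_resolving (@Sn_adj n) [set w in ws].
Proof.
move=> hw0 lw0 unblind; apply/forallP => u; apply/forallP => v; apply/implyP => uv.
case: (Sn_adj_cases uv) => [[puv luv] | [luv hnear]].
  apply/existsP; exists w0; rewrite inE hw0 resolves_Sn /Sn_dist puv lw0 /=.
  by move: luv; rewrite /absdiff; lia.
apply/contraT; rewrite negb_exists_in => /forall_inP nores; exfalso.
have same w : w \in ws -> sqcdist (2 * n) (pos u) (pos w) = sqcdist (2 * n) (pos v) (pos w).
  move=> hw; have := nores w; rewrite inE hw resolves_Sn /Sn_dist luv eqn_add2l negbK.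
  by move=> /(_ isT) /eqP.
have hu := pos_lt u; have hv := pos_lt v.
have [hs|hs] : rim_step n (pos u) (pos v) \/ rim_step n (pos v) (pos u).
  by case: hnear => [[h|h]|[h|h]]; [left|right|left|right]; split=> //; [left|left|right|right].
- apply: (unblind (pos u) (pos v)); split=> //.
  by apply/allP => _ /mapP [w hw ->]; rewrite same.
- apply: (unblind (pos v) (pos u)); split=> //.
  by apply/allP => _ /mapP [w hw ->]; rewrite same.
Qed.

Lemma Sn_local_resolving_rim (Q : seq nat) : Q != [::] -> all (fun q => q < 2 * n) Q ->
  (forall p p', ~ rim_blind n Q p p') ->
  exists2 W : {set V}, local_resolving (@Sn_adj n) W & #|W| <= size Q.
Proof.
move=> Q0 hQ unblind.
have [ws [pws lws]] : exists ws : seq V, map pos ws = Q /\ all (fun w => layer w == 0) ws.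
  elim: Q {Q0 unblind} hQ => [|q Q IH] /=; first by exists [::].
  case/andP => /Sn_rim_vertex [w [lw pw]] /IH [ws [pws lws]].
  by exists (w :: ws); rewrite /= pw pws lw eqxx.
case: ws pws lws => [|w0 ws'] pws lws; first by move: Q0; rewrite -pws.
exists [set w in w0 :: ws']; last by rewrite cardsE -pws size_map card_size.
apply: (Sn_local_resolving_landmarks (w0 := w0)); first exact: mem_head.
  by move: lws => /= /andP [/eqP].
by rewrite pws.
Qed.

Lemma Sn_local_resolving_card_gt k (W : {set V}) : local_resolving (@Sn_adj n) W ->
  (forall Q : seq nat, size Q <= k -> all (fun q => q < 2 * n) Q ->
     exists p p', rim_blind n Q p p') ->
  k < #|W|.
Proof.
move=> hW hQ; apply: (local_resolving_card_gt hW) => s hs.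
have hsz : size [seq pos w | w <- s] <= k by rewrite size_map.
have hlt : all (fun q => q < 2 * n) [seq pos w | w <- s].
  by apply/allP => _ /mapP [w _ ->]; apply: pos_lt.
have [p [p' [hst hbl]]] := hQ _ hsz hlt.
have [u [v [uv lu lv pu pv]]] := Sn_rim_edge hst.
exists u, v; split=> // w hw; rewrite resolves_Sn negbK /Sn_dist lu lv pu pv eqn_add2l.
by move/allP: hbl => /(_ (pos w) (map_f pos hw)).
Qed.
End ConvexPolytope.

Theorem theorem3p1 (n : nat) (hn : 3 <= n) :
  lmd (@Sn_adj n) = if odd n then 2 else 3.
Proof.
case: ifP => n_odd.
- have Q01 : all (fun q => q < 2 * n) [:: 0; 1] by rewrite /=; lia.
  have [W hW hcard] :=
    Sn_local_resolving_rim hn (Q := [:: 0; 1]) isT Q01 (fun p p' => not_rim_blind01 hn n_odd).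
  apply: (lmd_eq hW hcard) => W' hW'.
  exact: (Sn_local_resolving_card_gt hn hW' (rim_blind_exists1 hn)).
- have Q012 : all (fun q => q < 2 * n) [:: 0; 1; 2] by rewrite /=; lia.
  have [W hW hcard] := Sn_local_resolving_rim hn (Q := [:: 0; 1; 2]) isT Q012 (not_rim_blind012 hn).
  apply: (lmd_eq hW hcard) => W' hW'.
  by apply: (Sn_local_resolving_card_gt hn hW') => Q; apply: rim_blind_exists2; rewrite ?n_odd.
Qed.
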